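(* For every $z\in Z$ and all $v,w\in W$, \[ \pi\bullet\big(\zeta(v)_{I_w}\cdot z\big)=\pi\bullet\big([v]\cdot(Y_{I_w}\bullet z)\big)=(Y_{I_w}\bullet z)_v\,\mathbf{1}, \] where $(y)_v$ denotes the $v$-coordinate of $y\in Z$.
   Context: Let $\Phi$ be a finite real root system with simple roots $\Pi$, positive roots $\Phi_+$, negative roots $\Phi_-=-\Phi_+$, and finite Coxeter group $W$ generated by the reflections $s_\alpha$, $s_\alpha(\lambda)=\lambda-\alpha^\vee(\lambda)\alpha$. Let $\mathcal O\subset\mathbb R$ be its coefficient ring, $\Lambda_r$ the $\mathcal O$-span of $\Pi$, $\Lambda_w=\{\lambda\in\Lambda_r\otimes K:\alpha^\vee(\lambda)\in\mathcal O\ \forall\alpha\in\Phi_+\}$ ($K$ the fraction field of $\mathcal O$), and $\Lambda$ a free $\mathcal O$-module with $\Lambda_r\subset\Lambda\subset\Lambda_w$. Let $F$ be a one-dimensional commutative formal group law over a commutative ring $R$, and $S$ the formal group ring: $S=R[[x_\lambda]]_{\lambda\in\Lambda}/\overline{J}$ where $\overline J$ is the closure of the ideal generated by $x_0$ and $x_{\lambda+\mu}-F(x_\lambda,x_\mu)$ (no completion if $F$ is a polynomial); in the non-crystallographic case $F$ is additive, $R=\mathcal O$ and $S=\mathrm{Sym}_{\mathcal O}(\Lambda)$ with $x_\lambda=\lambda$. $W$ acts on $S$ by $w(x_\lambda)=x_{w(\lambda)}$. Assume each $x_\alpha$ is regular in $S$ and that for distinct $\alpha,\alpha'\in\Phi_+$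 and $f\in S$, $x_\alpha\mid x_{\alpha'}f$ implies $x_\alpha\mid f$. Let $Q=S[1/x_\alpha:\alpha\in\Phi_+]$ and $Q_W$ the twisted group algebra: the free left $Q$-module on $\{\delta_w\}_{w\in W}$ with $\delta_w q=w(q)\delta_w$. Put $Y_\alpha=\frac1{x_{-\alpha}}+\frac1{x_\alpha}\delta_{s_\alpha}$, $Y_i=Y_{\alpha_i}$ for simple roots $\alpha_i$. For each $w\in W$ fix a reduced expression $w=s_{i_1}\cdots s_{i_l}$, write $I_w=(i_1,\dots,i_l)$, $Y_{I_w}=Y_{i_1}\cdots Y_{i_l}$, and $I_w^{-1}=(i_l,\dots,i_1)$, $Y_{I_w^{-1}}=Y_{i_l}\cdots Y_{i_1}$. The structure algebra is $Z=\{(z_v)_{v\in W}\in\bigoplus_{v\in W}S: z_{s_\alpha w}-z_w\in x_\alpha S\ \forall w\in W,\alpha\in\Phi_+\}$ with coordinatewise product. The Hecke action of $Q_W$ is $q\delta_w\bullet(z_v)_v=(v(q)z_{vw})_v$ and the Weyl action is $q\delta_w\odot(z_v)_v=(q\,w(z_{w^{-1}v}))_v$. Let $\mathbf 1=(1)_v$, $x_\Pi=\prod_{\alpha\in\Phi_-}x_\alpha$, $[e]\in Z$ the element with $e$-coordinate $x_\Pi$ and all other coordinates $0$, $[v]=\delta_v\odot[e]$, and twisted Schubert classes $\zeta(v)_{I_w}=Y_{I_w^{-1}}\bullet[v]$. The push-forward element is $\pi=\sum_{w\in W}\frac{1}{w(x_\Pi)}\delta_w\in Q_W$, acting on $Z$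 by the Hecke action. *)

From HB Require Import structures.
From mathcomp Require Import all_boot all_order all_algebra all_fingroup.
From mathcomp Require Import reals.
Set Implicit Arguments.
Unset Strict Implicit.
Unset Printing Implicit Defensive.
Import Order.TTheory GRing.Theory Num.Theory.
Local Open Scope ring_scope.

(* roots.  A coroot alpha^vee is represented by a row vector, acting    *)
(* by the standard pairing.                                             *)

Definition pairing (R : realType) (n : nat) (f l : 'rV[R]_n) : R :=
  \sum_(i < n) f 0 i * l 0 i.

Definition refl (R : realType) (n : nat) (cor : 'rV[R]_n -> 'rV[R]_n)
  (a l : 'rV[R]_n) : 'rV[R]_n := l - pairing (cor a) l *: a.

Record RootSystem (R : realType) (n : nat) := {
  roots : seq 'rV[R]_n;
  coroot : 'rV[R]_n -> 'rV[R]_n;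
  simple : 'I_n -> 'rV[R]_n;
  coord : 'rV[R]_n -> 'I_n -> R;
  roots_uniq : uniq roots;
  roots_nz : (0 : 'rV[R]_n) \notin roots;
  roots_reduced : forall a b c, a \in roots -> b \in roots -> b = c *: a ->
      c = 1 \/ c = -1;
  coroot_root : forall a, a \in roots -> pairing (coroot a) a = 2;
  refl_roots : forall a b, a \in roots -> b \in roots ->
      refl coroot a b \in roots;
  simple_roots : forall i, simple i \in roots;
  simple_free : forall c : 'I_n -> R, \sum_(i < n) c i *: simple i = 0 ->
      forall i, c i = 0;
  coordE : forall l, l = \sum_(i < n) coord l i *: simple i;
  roots_sign : forall a, a \in roots ->
      [forall i, 0 <= coord a i] || [forall i, coord a i <= 0]
}.

Section RS.
Variables (R : realType) (n : nat) (Phi : RootSystem R n).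
Definition posroot (a : 'rV[R]_n) : bool :=
  (a \in roots Phi) && [forall i, 0 <= coord Phi a i].
Definition negroot (a : 'rV[R]_n) : bool :=
  (a \in roots Phi) && [forall i, coord Phi a i <= 0] && (a != 0).
Definition crefl (a : 'rV[R]_n) := refl (coroot Phi) a.

(* The coefficient ring O: the subring of R generated by the numbers
   alpha^vee(beta), alpha, beta in Phi (this is Z for crystallographic Phi). *)
Definition subring_of (P : R -> Prop) :=
  [/\ P 0, P 1, forall a b, P a -> P b -> P (a - b) & forall a b, P a -> P b -> P (a * b)].
Definition coefO (r : R) : Prop :=
  forall P : R -> Prop, subring_of P ->
    (forall a b, a \in roots Phi -> b \in roots Phi -> P (pairing (coroot Phi a) b)) ->
    P r.
Definition coefK (r : R) : Prop :=
  exists a b, [/\ coefO a, coefO b, b != 0 & r = a / b].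
Definition root_lattice (l : 'rV[R]_n) : Prop :=
  exists c : 'I_n -> R, (forall i, coefO (c i)) /\ l = \sum_(i < n) c i *: simple Phi i.
Definition weight_lattice (l : 'rV[R]_n) : Prop :=
  (exists c : 'I_n -> R, (forall i, coefK (c i)) /\ l = \sum_(i < n) c i *: simple Phi i)
  /\ forall a, posroot a -> coefO (pairing (coroot Phi a) l).
Definition admissible_lattice (L : 'rV[R]_n -> Prop) : Prop :=
  [/\ L 0, (forall l m, L l -> L m -> L (l + m)),
      (forall c l, coefO c -> L l -> L (c *: l)),
      (forall l, root_lattice l -> L l) &
      (forall l, L l -> weight_lattice l)] /\
  (exists k (b : 'I_k -> 'rV[R]_n),
        [/\ (forall i, L (b i)),
            (forall l, L l -> exists c : 'I_k -> R,
                 (forall i, coefO (c i)) /\ l = \sum_(i < k) c i *: b i) &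
            (forall c : 'I_k -> R, (forall i, coefO (c i)) ->
                 \sum_(i < k) c i *: b i = 0 -> forall i, c i = 0)]).
End RS.

Record Setting (R : realType) (n : nat) := {
  Phi : RootSystem R n;
  gT : finGroupType;
  W : {group gT};
  wact : gT -> 'rV[R]_n -> 'rV[R]_n;
  sref : 'rV[R]_n -> gT;
  wact1 : forall l, wact 1 l = l;
  wactM : forall u w l, u \in W -> w \in W -> wact (u * w) l = wact u (wact w l);
  wact_faithful : forall u w, u \in W -> w \in W -> (forall l, wact u l = wact w l) -> u = w;
  sref_in : forall a, a \in roots Phi -> sref a \in W;
  wact_sref : forall a l, a \in roots Phi -> wact (sref a) l = crefl Phi a l;
  W_gen : forall H : {group gT}, (forall a, posroot Phi a -> sref a \in H) ->
      W \subset H;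
  Lam : 'rV[R]_n -> Prop;
  Lam_adm : admissible_lattice Phi Lam;
  S : comNzRingType;
  x : 'rV[R]_n -> S;
  sact : gT -> {rmorphism S -> S};
  sact1 : forall s, sact 1 s = s;
  sactM : forall u w s, u \in W -> w \in W -> sact (u * w) s = sact u (sact w s);
  sact_x : forall w l, w \in W -> Lam l -> sact w (x l) = x (wact w l);
  x0 : x 0 = 0;
  x_opp : forall l, Lam l -> exists u v : S, u * v = 1 /\ x (- l) = x l * u;
  x_regular : forall a (f : S), a \in roots Phi -> x a * f = 0 -> f = 0;
  x_div : forall a a' (f : S), posroot Phi a -> posroot Phi a' -> a != a' ->
      (exists g, x a' * f = x a * g) -> exists g, f = x a * g;
  Q : comUnitRingType;
  iota : {rmorphism S -> Q};
  iota_unit : forall a, posroot Phi a -> iota (x a) \is a GRing.unit;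
  iota_surj : forall q : Q, exists (s : S) (l : seq 'rV[R]_n),
      all (posroot Phi) l /\ q = iota s / iota (\prod_(a <- l) x a);
  iota_ker : forall s : S, iota s = 0 -> exists l : seq 'rV[R]_n,
      all (posroot Phi) l /\ s * \prod_(a <- l) x a = 0;
  qact : gT -> {rmorphism Q -> Q};
  qact_iota : forall w s, w \in W -> qact w (iota s) = iota (sact w s)
}.

Section Ops.
Variables (R : realType) (n : nat) (D : Setting R n).
Local Notation gT := (gT D).
Local Notation Q := (Q D).
Local Notation W := (W D).

Definition sI (i : 'I_n) : gT := @sref _ _ D (simple (Phi D) i).
Definition word_prod (I : seq 'I_n) : gT := \prod_(i <- I) sI i.
Definition reduced_expr (I : seq 'I_n) (w : gT) : Prop :=
  word_prod I = w /\ forall J : seq 'I_n, word_prod J = w -> (size I <= size J)%N.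

(* twisted group algebra Q_W : sum_w q_w delta_w, stored as w |-> q_w *)
Definition QW := gT -> Q.
Definition qdelta (w : gT) (q : Q) : QW := fun u => if u == w then q else 0.
Definition qw_mul (a b : QW) : QW :=
  fun y => \sum_(u in W) a u * @qact _ _ D u (b (u^-1 * y)%g).
Definition qw_add (a b : QW) : QW := fun u => a u + b u.

Definition Yroot (a : 'rV[R]_n) : QW :=
  qw_add (qdelta 1 (@iota _ _ D (@x _ _ D (- a)))^-1) (qdelta (@sref _ _ D a) (@iota _ _ D (@x _ _ D a))^-1).
Definition Ysimple (i : 'I_n) : QW := Yroot (simple (Phi D) i).
Definition Yword (I : seq 'I_n) : QW := foldr (fun i acc => qw_mul (Ysimple i) acc) (qdelta 1 1) I.

(* elements of (+)_{v in W} Q, indexed by v in gT (only v in W matter) *)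
Definition tupQ := gT -> Q.
(* Hecke action: q delta_w . (z_v) = (v(q) z_{vw})_v *)
Definition hecke (X : QW) (z : tupQ) : tupQ :=
  fun v => \sum_(w in W) @qact _ _ D v (X w) * z (v * w)%g.
Definition weyl (X : QW) (z : tupQ) : tupQ :=
  fun v => \sum_(w in W) X w * @qact _ _ D w (z (w^-1 * v)%g).
Definition tmul (y z : tupQ) : tupQ := fun v => y v * z v.
Definition tone : tupQ := fun _ => 1.

(* structure algebra Z, as a predicate on tuples of elements of S *)
Definition inZ (z : gT -> S D) : Prop :=
  forall w a, w \in W -> posroot (Phi D) a ->
    exists f : S D, z (@sref _ _ D a * w)%g - z w = @x _ _ D a * f.
Definition toQ (z : gT -> S D) : tupQ := fun v => @iota _ _ D (z v).

Definition xPi : S D := \prod_(b <- roots (Phi D) | negroot (Phi D) b) @x _ _ D b.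
(* [e] and [v] = delta_v (.) [e] *)
Definition pt_e : tupQ := fun u => if u == 1%g then @iota _ _ D xPi else 0.
Definition pt (v : gT) : tupQ := weyl (qdelta v 1) pt_e.
Definition zeta (v : gT) (I : seq 'I_n) : tupQ := hecke (Yword (rev I)) (pt v).
Definition pushpi : QW := fun w => (@qact _ _ D w (@iota _ _ D xPi))^-1.
End Ops.

From Pilot Require Import Defs.
From HB Require Import structures.
From mathcomp Require Import all_boot all_order all_algebra all_fingroup.
From mathcomp Require Import reals boolp ring lra.
Import GRing.Theory Num.Theory Order.TTheory.
Local Open Scope ring_scope.
Set Implicit Arguments.
Unset Strict Implicit.

(* Every coordinate of pi • y is the localization sum push y = sum_w y_w / w(x_Pi),
   so both identities are statements about the form (a, b) |-> push (a b).  Each Y_i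
   is self-adjoint for it: the weight 1/x_{alpha_i} attached to delta_{s_i} moves
   across because s_i fixes x_Pi x_{alpha_i} (it permutes the negative roots other
   than -alpha_i and swaps x_{-alpha_i} with x_{alpha_i}).  Hence Y_{I^-1} moves from
   [v] onto z, and [v], supported at v with value v(x_Pi), evaluates at v.
   For the weights to make sense every x_beta must be a unit of Q, i.e. every root
   must lie in Lambda; this is the classical descent of a positive root to a simple
   root along simple reflections with decreasing height, driven by a W-invariant
   inner product. *)

Section Pairing.
Variables (R : realType) (n : nat).
Implicit Types f l m : 'rV[R]_n.

Lemma pairingC f l : pairing f l = pairing l f.
Proof. by apply: eq_bigr => i _; rewrite mulrC. Qed.

Lemma pairingD f l m : pairing f (l + m) = pairing f l + pairing f m.
Proof. by rewrite /pairing -big_split; apply: eq_bigr => i _; rewrite mxE mulrDr. Qed.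

Lemma pairingZ f c l : pairing f (c *: l) = c * pairing f l.
Proof. by rewrite /pairing mulr_sumr; apply: eq_bigr => i _; rewrite mxE mulrCA. Qed.

Lemma pairingN f l : pairing f (- l) = - pairing f l.
Proof. by rewrite -scaleN1r pairingZ mulN1r. Qed.

Lemma pairingB f l m : pairing f (l - m) = pairing f l - pairing f m.
Proof. by rewrite pairingD pairingN. Qed.

Lemma pairing_ge0 l : 0 <= pairing l l.
Proof. by apply: sumr_ge0 => i _; rewrite -expr2 sqr_ge0. Qed.

Lemma pairing_gt0 l : l != 0 -> 0 < pairing l l.
Proof.
move=> l0; have [i li0] : exists i, l 0 i != 0.
  case: (pickP (fun i => l 0 i != 0)) => [i|l_0]; first by exists i.
  by case/eqP: l0; apply/rowP => i; rewrite mxE; apply/eqP/negbFE/l_0.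
rewrite /pairing (bigD1 i) //= ltr_wpDr ?sumr_ge0 // => [j _|].
  by rewrite -expr2 sqr_ge0.
by rewrite -expr2 lt_def sqrf_eq0 li0 sqr_ge0.
Qed.

End Pairing.

Section RootSystemTheory.
Variables (R : realType) (n : nat) (P : RootSystem R n).
Local Notation roots := (Defs.roots P).
Local Notation simple := (Defs.simple P).
Local Notation coord := (Defs.coord P).
Local Notation coroot := (Defs.coroot P).
Implicit Types (a b l m : 'rV[R]_n) (i j k : 'I_n).

Lemma crefl_linear a c l m :
  crefl P a (c *: l + m) = c *: crefl P a l + crefl P a m.
Proof. by rewrite /crefl /refl pairingD pairingZ; apply/rowP => i; rewrite !mxE; ring. Qed.

Lemma creflN a l : crefl P a (- l) = - crefl P a l.
Proof. by rewrite /crefl /refl pairingN; apply/rowP => i; rewrite !mxE; ring. Qed.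

Lemma crefl_root a : a \in roots -> crefl P a a = - a.
Proof. by move=> Ra; rewrite /crefl /refl coroot_root // scaler_nat mulr2n opprD addNKr. Qed.

Lemma creflK a : a \in roots -> involutive (crefl P a).
Proof.
move=> Ra l; rewrite /crefl /refl pairingB pairingZ coroot_root //.
by apply/rowP => i; rewrite !mxE; ring.
Qed.

Lemma rootN a : a \in roots -> - a \in roots.
Proof. by move=> Ra; rewrite -crefl_root //; apply: refl_roots. Qed.

Lemma root_neq0 a : a \in roots -> a != 0.
Proof. by apply: contraTneq => ->; apply: roots_nz. Qed.

Lemma coord_comb (c : 'I_n -> R) j : coord (\sum_i c i *: simple i) j = c j.
Proof.
set l := \sum_i _; apply/eqP; rewrite -subr_eq0; apply/eqP.
apply: (@simple_free _ _ P (fun i => coord l i - c i)).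
by under eq_bigr do rewrite scalerBl; rewrite sumrB -coordE subrr.
Qed.

Lemma coordBZ l p m j : coord (l - p *: m) j = coord l j - p * coord m j.
Proof.
rewrite -[RHS](coord_comb (fun i => coord l i - p * coord m i)).
rewrite {1}(coordE P l) {1}(coordE P m) scaler_sumr -sumrB.
by congr (coord _ j); apply: eq_bigr => i _; rewrite scalerBl scalerA.
Qed.

Lemma coord0 j : coord 0 j = 0.
Proof. by have := coordBZ 0 1 0 j; rewrite scale1r mul1r !subrr. Qed.

Lemma coordN l j : coord (- l) j = - coord l j.
Proof. by have := coordBZ 0 1 l j; rewrite sub0r scale1r mul1r coord0 sub0r. Qed.

Lemma simpleE i : simple i = \sum_j (j == i)%:R *: simple j.
Proof.
by rewrite (bigD1 i) //= big1 ?eqxx ?scale1r ?addr0 // => j /negbTE ->; rewrite scale0r.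
Qed.

Lemma coord_simple i j : coord (simple i) j = (j == i)%:R.
Proof. by rewrite {1}simpleE coord_comb. Qed.

Lemma coord_crefl_simple i b k :
  coord (crefl P (simple i) b) k = coord b k - pairing (coroot (simple i)) b * (k == i)%:R.
Proof. by rewrite /crefl /refl coordBZ coord_simple. Qed.

Lemma posrootN a : posroot P a -> negroot P (- a).
Proof.
case/andP=> Ra /forallP a_ge0; rewrite /negroot rootN //= oppr_eq0 root_neq0 // andbT.
by apply/forallP => i; rewrite coordN oppr_le0.
Qed.

Lemma negrootN a : negroot P a -> posroot P (- a).
Proof.
case/andP=> /andP[Ra /forallP a_le0] _; rewrite /posroot rootN //=.
by apply/forallP => i; rewrite coordN oppr_ge0.
Qed.

Lemma posroot_or_negroot a : a \in roots -> posroot P a || negroot P a.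
Proof. by move=> Ra; rewrite /posroot /negroot Ra root_neq0 //= andbT roots_sign. Qed.

Lemma posroot_coord_gt0 b k : b \in roots -> 0 < coord b k -> posroot P b.
Proof.
move=> Rb b_gt0; rewrite /posroot Rb /=.
by case/orP: (roots_sign Rb) => // /forallP/(_ k); rewrite leNgt b_gt0.
Qed.

Lemma negroot_coord_lt0 b k : b \in roots -> coord b k < 0 -> negroot P b.
Proof.
move=> Rb b_lt0; rewrite /negroot Rb root_neq0 // andbT /=.
by case/orP: (roots_sign Rb) => // /forallP/(_ k); rewrite leNgt b_lt0.
Qed.

Lemma posroot_simple i : posroot P (simple i).
Proof.
by rewrite /posroot simple_roots; apply/forallP => j; rewrite coord_simple ler0n.
Qed.

Lemma negroot_simple i : ~~ negroot P (simple i).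
Proof. by apply/negP => /andP[/andP[_ /forallP/(_ i)]]; rewrite coord_simple eqxx ler10. Qed.

Lemma root_coord_off_simple b i : b \in roots -> b != simple i -> b != - simple i ->
  exists2 k, k != i & coord b k != 0.
Proof.
move=> Rb b_ne b_neN; case: (pickP (fun k => (k != i) && (coord b k != 0))).
  by move=> k /andP[]; exists k.
move=> b_off; have Eb : b = coord b i *: simple i.
  rewrite {1}(coordE P b) (bigD1 i) //= big1 ?addr0 // => k ki.
  by move: (b_off k); rewrite ki /= => /negbFE/eqP ->; rewrite scale0r.
case: (roots_reduced (simple_roots P i) Rb Eb) => c1.
  by rewrite Eb c1 scale1r eqxx in b_ne.
by rewrite Eb c1 scaleN1r eqxx in b_neN.
Qed.

Lemma negroot_crefl_simple i b : negroot P b -> b != - simple i ->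
  negroot P (crefl P (simple i) b) && (crefl P (simple i) b != - simple i).
Proof.
move=> Nb b_neN; have Rb : b \in roots by case/andP: Nb => /andP[].
have Ri := simple_roots P i.
have b_ne : b != simple i by apply: contraNneq (negroot_simple i) => <-.
have [k ki bk0] := root_coord_off_simple Rb b_ne b_neN.
have bk_lt0 : coord b k < 0.
  by case/andP: Nb => /andP[_ /forallP/(_ k)]; rewrite le_eqVlt (negbTE bk0).
apply/andP; split.
  apply: (negroot_coord_lt0 (k := k)); first exact: refl_roots.
  by rewrite coord_crefl_simple (negbTE ki) mulr0 subr0.
apply: contraNneq (negroot_simple i) => sb.
suff -> : simple i = b by [].
by rewrite -(creflK Ri b) sb creflN crefl_root // opprK.
Qed.

Lemma perm_negroots_crefl_simple i :
  perm_eq (map (crefl P (simple i)) [seq b <- roots | negroot P b & b != - simple i])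
          [seq b <- roots | negroot P b & b != - simple i].
Proof.
set N := [seq b <- _ | _]; have Ri := simple_roots P i.
have uN : uniq N by rewrite filter_uniq // roots_uniq.
have sN b : b \in N -> crefl P (simple i) b \in N.
  rewrite !mem_filter => /andP[/andP[Nb b_ne] Rb].
  by rewrite negroot_crefl_simple // refl_roots.
apply: uniq_perm => //; first by rewrite map_inj_uniq //; apply: can_inj (creflK Ri).
move=> b; apply/mapP/idP => [[c Nc ->]|Nb]; first exact: sN.
by exists (crefl P (simple i) b); rewrite ?creflK ?sN.
Qed.

Definition height l : R := \sum_i coord l i.

Lemma height_crefl_simple i b :
  height (crefl P (simple i) b) = height b - pairing (coroot (simple i)) b.
Proof.
have sum_delta : \sum_k ((k == i)%:R : R) = 1.
  by rewrite (bigD1 i) //= big1 ?eqxx ?addr0 // => k /negbTE ->.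
rewrite /height; under eq_bigr do rewrite coord_crefl_simple.
by rewrite sumrB -mulr_sumr sum_delta mulr1.
Qed.

Lemma coefO_pairing a b : a \in roots -> b \in roots -> coefO P (pairing (coroot a) b).
Proof. by move=> Ra Rb T _; apply. Qed.

Lemma coefO0 : coefO P 0.
Proof. by move=> T []. Qed.

Lemma coefO1 : coefO P 1.
Proof. by move=> T []. Qed.

Lemma coefON r : coefO P r -> coefO P (- r).
Proof.
move=> Or T T_sub TP; case: (T_sub) => T0 _ TB _.
by rewrite -sub0r; apply: TB => //; apply: Or.
Qed.

End RootSystemTheory.

Section GroupSums.
Variables (gT : finGroupType) (G : {group gT}) (V : nmodType).

Lemma sum_group_mulr s (F : gT -> V) :
  s \in G -> \sum_(w in G) F (w * s)%g = \sum_(w in G) F w.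
Proof.
move=> Gs; rewrite [RHS](reindex_inj (mulIg s)) /=.
by apply: eq_bigl => w; rewrite groupMr.
Qed.

Lemma sum_group_mull s (F : gT -> V) :
  s \in G -> \sum_(w in G) F (s * w)%g = \sum_(w in G) F w.
Proof.
move=> Gs; rewrite [RHS](reindex_inj (mulgI s)) /=.
by apply: eq_bigl => w; rewrite groupMl.
Qed.

End GroupSums.

Section SettingTheory.
Variables (R : realType) (n : nat) (D : Setting R n).
Local Notation P := (Phi D).
Local Notation roots := (Defs.roots P).
Local Notation simple := (Defs.simple P).
Local Notation coord := (Defs.coord P).
Local Notation coroot := (Defs.coroot P).
Local Notation W := (W D).
Local Notation wact := (@Defs.wact _ _ D).
Local Notation sact := (@Defs.sact _ _ D).
Local Notation qact := (@Defs.qact _ _ D).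
Local Notation x := (Defs.x D).
Local Notation sref := (Defs.sref D).
Local Notation iota := (Defs.iota D).
Local Notation Lam := (Defs.Lam D).
Local Notation Q := (Defs.Q D).
Implicit Types (a b l m : 'rV[R]_n) (i j k : 'I_n).

Lemma LamD l m : Lam l -> Lam m -> Lam (l + m).
Proof. by case: (Lam_adm D) => -[_ LD _ _ _] _; apply: LD. Qed.

Lemma LamZ c l : coefO P c -> Lam l -> Lam (c *: l).
Proof. by case: (Lam_adm D) => -[_ _ LZ _ _] _; apply: LZ. Qed.

Lemma LamN l : Lam l -> Lam (- l).
Proof. by move=> Ll; rewrite -scaleN1r; apply: LamZ Ll; apply: coefON; apply: coefO1. Qed.

Lemma Lam_simple i : Lam (simple i).
Proof.
case: (Lam_adm D) => -[_ _ _ Lam_rl _] _; apply: Lam_rl.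
exists (fun j => (j == i)%:R); split; last exact: simpleE.
by move=> j; case: (j == i); [apply: coefO1 | apply: coefO0].
Qed.

Lemma Lam_crefl a l : a \in roots -> l \in roots -> Lam a -> Lam l ->
  Lam (crefl P a l).
Proof.
move=> Ra Rl La Ll; rewrite /crefl /refl -scaleNr.
by apply: LamD => //; apply: LamZ => //; apply: coefON; apply: coefO_pairing.
Qed.

Lemma sref_sqr a : a \in roots -> (sref a * sref a = 1)%g.
Proof.
move=> Ra; have Wa := sref_in Ra.
apply: wact_faithful; rewrite ?groupM // => l.
by rewrite wactM // wact1 !wact_sref // creflK.
Qed.

Lemma wact_linear w c l m : w \in W ->
  wact w (c *: l + m) = c *: wact w l + wact w m.
Proof.
pose linear_at u := `[< forall c l m, wact u (c *: l + m) = c *: wact u l + wact u m >].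
have linear_group : group_set [set u in W | linear_at u].
  apply/andP; split.
    by rewrite inE group1; apply/asboolP => c' l' m'; rewrite !wact1.
  apply/subsetP => _ /mulsgP[u v Hu Hv ->].
  move: Hu Hv; rewrite !inE => /andP[Wu /asboolP lin_u] /andP[Wv /asboolP lin_v].
  by rewrite groupM //; apply/asboolP => c' l' m'; rewrite !wactM // lin_v lin_u.
have /subsetP sub_lin : W \subset Group linear_group.
  apply: W_gen => a /andP[Ra _]; rewrite inE sref_in //=.
  by apply/asboolP => c' l' m'; rewrite !wact_sref // crefl_linear.
by move=> /sub_lin; rewrite inE => /andP[_ /asboolP].
Qed.

Definition invform l m : R := \sum_(w in W) pairing (wact w l) (wact w m).

Lemma invformC l m : invform l m = invform m l.
Proof. by apply: eq_bigr => w _; rewrite pairingC. Qed.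

Lemma invform_linear l c m m' :
  invform l (c *: m + m') = c * invform l m + invform l m'.
Proof.
rewrite /invform mulr_sumr -big_split; apply: eq_bigr => w Ww.
by rewrite wact_linear // pairingD pairingZ.
Qed.

Lemma invform0 l : invform l 0 = 0.
Proof. by have := invform_linear l (-1) 0 0; rewrite scaleN1r oppr0 addr0 mulN1r addNr. Qed.

Lemma invformN l m : invform l (- m) = - invform l m.
Proof. by rewrite -[- m]addr0 -scaleN1r invform_linear invform0 addr0 mulN1r. Qed.

Lemma invform_comb l (c : 'I_n -> R) (f : 'I_n -> 'rV[R]_n) :
  invform l (\sum_i c i *: f i) = \sum_i c i * invform l (f i).
Proof.
apply: (big_rec2 (fun s t => invform l t = s)); first exact: invform0.
by move=> i s t _ <-; rewrite invform_linear.
Qed.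

Lemma invform_crefl a l m : a \in roots ->
  invform (crefl P a l) (crefl P a m) = invform l m.
Proof.
move=> Ra; rewrite /invform -!wact_sref //.
rewrite -(sum_group_mulr (fun w => pairing (wact w l) (wact w m)) (sref_in Ra)).
by apply: eq_bigr => w Ww; rewrite !wactM // sref_in.
Qed.

Lemma invform_gt0 l : l != 0 -> 0 < invform l l.
Proof.
move=> l0; rewrite /invform (bigD1 1%g) //= wact1 ltr_pwDl ?pairing_gt0 //.
by apply: sumr_ge0 => w _; apply: pairing_ge0.
Qed.

(* Invariance under s_a, applied to the pair (l, a), since s_a a = -a. *)
Lemma invform_coroot a l : a \in roots ->
  2 * invform l a = pairing (coroot a) l * invform a a.
Proof.
move=> Ra; have := invform_crefl l a Ra.
rewrite crefl_root // invformN invformC /crefl /refl -scaleNr addrC invform_linear.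
by rewrite (invformC a l); lra.
Qed.

Lemma posroot_pairing_simple_gt0 b : posroot P b ->
  exists2 j, 0 < coord b j & 0 < pairing (coroot (simple j)) b.
Proof.
move=> /andP[Rb /forallP b_ge0].
have : ~~ [forall j, coord b j * invform (simple j) b <= 0].
  apply/forallP => le0; have := invform_gt0 (root_neq0 Rb).
  rewrite {1}(coordE P b) invformC invform_comb.
  under eq_bigr do rewrite invformC.
  by rewrite ltNge sumr_le0.
case/forallPn => j; rewrite -ltNge => prod_gt0.
have bj_gt0 : 0 < coord b j.
  by rewrite lt_def b_ge0 andbT; apply: contraTneq prod_gt0 => ->; rewrite mul0r ltxx.
have B_gt0 : 0 < invform (simple j) b by rewrite -(pmulr_rgt0 _ bj_gt0).
exists j => //.
have Rj := simple_roots P j.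
have := invform_coroot b Rj; rewrite invformC.
have := invform_gt0 (root_neq0 Rj); nra.
Qed.

Lemma posroot_descent b : posroot P b -> (forall i, b != simple i) ->
  exists j, posroot P (crefl P (simple j) b) /\
            height P (crefl P (simple j) b) < height P b.
Proof.
move=> Pb b_nsimple; have Rb : b \in roots by case/andP: Pb.
have [j bj_gt0 p_gt0] := posroot_pairing_simple_gt0 Pb.
have b_neN : b != - simple j.
  apply: contraTneq bj_gt0 => ->.
  by rewrite coordN coord_simple eqxx -leNgt oppr_le0.
have [k kj bk0] := root_coord_off_simple Rb (b_nsimple j) b_neN.
exists j; split; last by rewrite height_crefl_simple ltrBlDr ltrDl.
apply: (posroot_coord_gt0 (k := k)); first exact/refl_roots/Rb/simple_roots.
rewrite coord_crefl_simple (negbTE kj) mulr0 subr0 lt_def bk0 /=.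
by case/andP: Pb => _ /forallP ->.
Qed.

Lemma Lam_root b : b \in roots -> Lam b.
Proof.
suff Lam_pos c : posroot P c -> Lam c.
  move=> Rb; case/orP: (posroot_or_negroot Rb) => [/Lam_pos //|/negrootN/Lam_pos].
  by move/LamN; rewrite opprK.
(* Induction on the number of roots of smaller height. *)
pose hs := map (height P) roots.
move: {2}(count (< height P c) hs).+1 (ltnSn (count (< height P c) hs)) => N.
elim: N c => // N IH c lt_c_N Pc.
case: (pickP (fun i => c == simple i)) => [i /eqP -> | c_nsimple].
  exact: Lam_simple.
have [j [Pc' lt_c'_c]] := posroot_descent Pc (fun i => negbT (c_nsimple i)).
have Rj := simple_roots P j.
have Rc' : crefl P (simple j) c \in roots by case/andP: Pc'.
rewrite -(creflK Rj c); apply: Lam_crefl => //; first exact: Lam_simple.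
apply: IH Pc'; rewrite -ltnS; apply: leq_trans lt_c_N; rewrite ltnS.
set c' := crefl P (simple j) c.
apply: (@leq_trans (count (<= height P c') hs)); first by rewrite count_lt_le_mem map_f.
by apply: sub_count => h /= /le_lt_trans; apply.
Qed.

Lemma iota_x_unit b : b \in roots -> iota (x b) \is a GRing.unit.
Proof.
move=> Rb; case/orP: (posroot_or_negroot Rb) => [/iota_unit //|Nb].
have [u [v [uv x_b]]] := x_opp (Lam_root (rootN Rb)).
rewrite opprK in x_b; rewrite x_b rmorphM unitrM iota_unit ?negrootN //=.
by apply/unitrP; exists (iota v); rewrite mulrC -rmorphM uv rmorph1.
Qed.

Lemma iota_xPi_unit : iota (xPi D) \is a GRing.unit.
Proof. by rewrite rmorph_prod; apply: unitr_prod_in => b Rb _; apply: iota_x_unit. Qed.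

Lemma iota_sact_unit w t : w \in W ->
  iota t \is a GRing.unit -> iota (sact w t) \is a GRing.unit.
Proof. by move=> Ww t_unit; rewrite -qact_iota // rmorph_unit. Qed.

Lemma qact_iotaV w t : w \in W -> iota t \is a GRing.unit ->
  qact w (iota t)^-1 = (iota (sact w t))^-1.
Proof. by move=> Ww t_unit; rewrite rmorphV // qact_iota. Qed.

Lemma qactM u w q : u \in W -> w \in W -> qact u (qact w q) = qact (u * w)%g q.
Proof.
move=> Wu Ww; have [t [l [l_pos ->]]] := iota_surj q.
have prod_unit : iota (\prod_(a <- l) x a) \is a GRing.unit.
  rewrite rmorph_prod; apply: unitr_prod_in => a la _.
  by apply: iota_unit; move/allP: l_pos; apply.
rewrite !rmorphM !qact_iotaV ?groupM ?iota_sact_unit //.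
by rewrite !qact_iota ?groupM // !sactM.
Qed.

Lemma sact_sref_x a b : a \in roots -> b \in roots ->
  sact (sref a) (x b) = x (crefl P a b).
Proof. by move=> Ra Rb; rewrite sact_x ?sref_in ?(wact_sref _ Ra) //; apply: Lam_root. Qed.

(* s_i permutes the negative roots other than -alpha_i, and swaps x_{-alpha_i}
   with x_{alpha_i}. *)
Lemma sact_simple_xPi_x i :
  sact (sref (simple i)) (xPi D * x (simple i)) = xPi D * x (simple i).
Proof.
set a := simple i; have Ra : a \in roots := simple_roots P i.
set N := [seq b <- roots | negroot P b & b != - a].
have xPiE : xPi D = x (- a) * \prod_(b <- N) x b.
  rewrite /xPi -big_filter (bigD1_seq (- a)) ?filter_uniq ?roots_uniq //; last first.
    by rewrite mem_filter posrootN ?posroot_simple ?rootN.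
  by rewrite big_filter_cond big_filter.
have prodN : \prod_(b <- N) sact (sref a) (x b) = \prod_(b <- N) x b.
  rewrite (eq_big_seq (x \o crefl P a)) => [|b]; last first.
    by rewrite mem_filter => /andP[_ Rb]; rewrite sact_sref_x.
  by rewrite -(big_map (crefl P a) predT x) (perm_big _ (perm_negroots_crefl_simple P i)).
rewrite xPiE !rmorphM rmorph_prod prodN !sact_sref_x ?rootN //.
by rewrite creflN crefl_root // opprK; ring.
Qed.

Definition wxPi (w : gT D) : Q := iota (sact w (xPi D)).

Lemma wxPi_unit w : w \in W -> wxPi w \is a GRing.unit.
Proof. by move=> Ww; apply/iota_sact_unit/iota_xPi_unit. Qed.

Definition push (y : tupQ D) : Q := \sum_(w in W) y w / wxPi w.

Lemma hecke_pushpi y u : u \in W -> hecke (pushpi (D:=D)) y u = push y.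
Proof.
move=> Wu; rewrite /hecke /push -[RHS](sum_group_mull _ Wu).
apply: eq_bigr => w Ww; rewrite /pushpi qact_iota // qact_iotaV ?iota_sact_unit //.
  by rewrite -sactM // mulrC.
exact: iota_xPi_unit.
Qed.

Lemma ptE v t : v \in W -> pt v t = if t == v then wxPi v else 0.
Proof.
move=> Wv; rewrite /pt /weyl (bigD1 v) //= big1 ?addr0 => [|w /andP[_ /negbTE wv]].
  rewrite /qdelta eqxx mul1r /pt_e -eq_mulVg1 eq_sym.
  by case: eqP => _; [rewrite qact_iota | rewrite rmorph0].
by rewrite /qdelta wv mul0r.
Qed.

Lemma push_pt v y : v \in W -> push (tmul (pt v) y) = y v.
Proof.
move=> Wv; rewrite /push (bigD1 v) //= big1 ?addr0 => [|w /andP[_ /negbTE wv]].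
  by rewrite /tmul ptE // eqxx mulrAC mulrV ?mul1r ?wxPi_unit.
by rewrite /tmul ptE // wv !mul0r.
Qed.

Lemma eq_push y y' : {in W, y =1 y'} -> push y = push y'.
Proof. by move=> yy'; apply: eq_bigr => w Ww; rewrite yy'. Qed.

Lemma sum_qact_qdelta u t c (F : gT D -> Q) : t \in W ->
  \sum_(w in W) qact u (qdelta t c w) * F w = qact u c * F t.
Proof.
move=> Wt; rewrite (bigD1 t) //= /qdelta eqxx big1 ?addr0 // => w /andP[_ /negbTE ->].
by rewrite rmorph0 mul0r.
Qed.

Lemma hecke_Ysimple i (a : tupQ D) u : u \in W ->
  hecke (Ysimple i) a u =
  qact u (iota (x (- simple i)))^-1 * a u +
  qact u (iota (x (simple i)))^-1 * a (u * sref (simple i))%g.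
Proof.
move=> Wu; rewrite /hecke /Ysimple /Yroot /qw_add.
under eq_bigr do rewrite rmorphD mulrDl.
by rewrite big_split /= !sum_qact_qdelta ?mulg1 ?sref_in ?simple_roots.
Qed.

Lemma hecke_qw_mul X Y y v : v \in W ->
  hecke (qw_mul X Y) y v = hecke X (hecke Y y) v.
Proof.
move=> Wv; rewrite /hecke /qw_mul.
under eq_bigr do rewrite rmorph_sum mulr_suml.
rewrite exchange_big; apply: eq_bigr => u Wu.
rewrite mulr_sumr -(sum_group_mull _ Wu); apply: eq_bigr => w Ww.
by rewrite mulKg rmorphM qactM // mulgA mulrA.
Qed.

Lemma eq_hecke X y y' v : {in W, y =1 y'} -> v \in W -> hecke X y v = hecke X y' v.
Proof. by move=> yy' Wv; apply: eq_bigr => w Ww; rewrite yy' ?groupM. Qed.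

Lemma qact_x_simple_wxPi i u : u \in W ->
  qact (u * sref (simple i))%g (iota (x (simple i)))^-1 / wxPi (u * sref (simple i))%g
  = qact u (iota (x (simple i)))^-1 / wxPi u.
Proof.
move=> Wu; have Ws : sref (simple i) \in W by rewrite sref_in ?simple_roots.
have xi_unit := iota_x_unit (simple_roots P i).
have E w : w \in W ->
    qact w (iota (x (simple i)))^-1 / wxPi w = (iota (sact w (xPi D * x (simple i))))^-1.
  move=> Ww; rewrite qact_iotaV // /wxPi [in RHS]rmorphM [in RHS]rmorphM invrM //.
    by apply: iota_sact_unit => //; apply: iota_xPi_unit.
  exact: iota_sact_unit.
by rewrite !E ?groupM // sactM // sact_simple_xPi_x.
Qed.

Lemma push_Ysimple_adjoint i (a b : tupQ D) :
  push (tmul (hecke (Ysimple i) a) b) = push (tmul a (hecke (Ysimple i) b)).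
Proof.
set s := sref (simple i); have Ws : s \in W by rewrite sref_in ?simple_roots.
set c := fun u => qact u (iota (x (- simple i)))^-1.
set d := fun u => qact u (iota (x (simple i)))^-1.
rewrite /push /tmul.
transitivity (\sum_(u in W) c u * a u * b u / wxPi u +
              \sum_(u in W) a (u * s)%g * b u * (d u / wxPi u)).
  by rewrite -big_split; apply: eq_bigr => u Wu; rewrite hecke_Ysimple //=; ring.
transitivity (\sum_(u in W) c u * a u * b u / wxPi u +
              \sum_(u in W) a u * b (u * s)%g * (d u / wxPi u)); last first.
  by rewrite -big_split; apply: eq_bigr => u Wu; rewrite hecke_Ysimple //=; ring.
congr (_ + _); rewrite -[RHS](sum_group_mulr _ Ws); apply: eq_bigr => u Wu.
by rewrite -mulgA sref_sqr ?simple_roots // mulg1 /d qact_x_simple_wxPi.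
Qed.

Definition hecke_word (I : seq 'I_n) (a : tupQ D) : tupQ D :=
  foldr (fun i => hecke (Ysimple i)) a I.

Lemma hecke_Yword I (a : tupQ D) v : v \in W -> hecke (Yword I) a v = hecke_word I a v.
Proof.
elim: I v => [|i I IH] v Wv /=.
  by rewrite /hecke sum_qact_qdelta // rmorph1 mul1r mulg1.
by rewrite hecke_qw_mul //; apply: eq_hecke.
Qed.

Lemma push_hecke_word_adjoint I (a b : tupQ D) :
  push (tmul (hecke_word (rev I) a) b) = push (tmul a (hecke_word I b)).
Proof.
elim: I a b => [|i I IH] a b //=.
by rewrite rev_cons /hecke_word foldr_rcons -/(hecke_word _ _) IH push_Ysimple_adjoint.
Qed.

Lemma push_hecke_Yword_adjoint I (a b : tupQ D) :
  push (tmul (hecke (Yword (rev I)) a) b) = push (tmul a (hecke (Yword I) b)).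
Proof.
rewrite (@eq_push _ (tmul (hecke_word (rev I) a) b)); last first.
  by move=> t Wt; rewrite /tmul hecke_Yword.
rewrite push_hecke_word_adjoint; apply: eq_push => t Wt.
by rewrite /tmul hecke_Yword.
Qed.

End SettingTheory.

Unset Implicit Arguments.

Theorem lemma3p5 (R : realType) (n : nat) (D : Setting R n)
  (z : gT D -> S D) (v w : gT D) (I : seq 'I_n) :
  inZ z -> v \in W D -> w \in W D -> @reduced_expr _ _ D I w ->
  (forall u, u \in W D ->
     hecke (@pushpi _ _ D) (tmul (zeta v I) (toQ z)) u
     = hecke (@pushpi _ _ D) (tmul (pt v) (hecke (@Yword _ _ D I) (toQ z))) u) /\
  (forall u, u \in W D ->
     hecke (@pushpi _ _ D) (tmul (pt v) (hecke (@Yword _ _ D I) (toQ z))) u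
     = hecke (@Yword _ _ D I) (toQ z) v * @tone _ _ D u).
Proof.
move=> _ Wv _ _; split=> u Wu; rewrite !hecke_pushpi //.
  exact: push_hecke_Yword_adjoint.
by rewrite push_pt // /tone mulr1.
Qed.
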